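(* Let $0 < 1/n_0 \ll \delta \ll 1$ and let $n\ge n_0$ and $k$ be positive integers with $k^2+k+1 \ge n \ge (k-1)^2+k+1$. Let $\mathcal H$ be an $n$-vertex linear hypergraph in which every edge $e$ satisfies $|e| \ge (1-\delta)\sqrt n$, and let $e,f\in\mathcal H$ be distinct intersecting edges each of size at most $k$. Let $w\in e\cap f$ and let $m$ be the number of edges of $\mathcal H$ of size at most $k-1$ containing $w$. If at least one of $e,f$ has size at most $k-1$, or if $m \le 1/(3\delta)$, then $\{e,f\}$ is a useful pair.
   Context: A hypergraph has a finite vertex set and a set of nonempty edges; linear means any two distinct edges share at most one vertex. For an edge $e$, $N(e)$ denotes the set of edges $f\ne e$ with $f\cap e\ne\varnothing$. In an $n$-vertex hypergraph a pair $\{e,f\}$ of edges is useful if $e\neq f$, $e\cap f\ne\varnothing$ and $|N(e)\cap N(f)|\le n-2$. Hierarchy convention: $0<1/n_0\ll\delta\ll1$ means there is $\delta_0>0$ such that for all $0<\delta\le\delta_0$ there is $n_0$ (depending on $\delta$) for which the statement holds. *)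

From HB Require Import structures.
From mathcomp Require Import all_boot all_order all_algebra.
From mathcomp Require Import reals.
Set Implicit Arguments. Unset Strict Implicit. Unset Printing Implicit Defensive.
Import Order.TTheory GRing.Theory Num.Theory.

Definition hypergraph n (H : {set {set 'I_n}}) : Prop :=
  forall e, e \in H -> e != set0.

Definition linear_hypergraph n (H : {set {set 'I_n}}) : Prop :=
  forall e f, e \in H -> f \in H -> e != f -> #|e :&: f| <= 1.

Definition nbhd n (H : {set {set 'I_n}}) (e : {set 'I_n}) : {set {set 'I_n}} :=
  [set f in H | (f != e) && (f :&: e != set0)].

Definition useful_pair n (H : {set {set 'I_n}}) (e f : {set 'I_n}) : Prop :=
  [/\ e != f, e :&: f != set0 & #|nbhd H e :&: nbhd H f| <= n - 2].

From HB Require Import structures.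
From mathcomp Require Import all_boot all_order all_algebra.
From mathcomp Require Import reals.
From mathcomp Require Import ring lra zify.
Import Order.TTheory GRing.Theory Num.Theory.
Set Implicit Arguments. Unset Strict Implicit. Unset Printing Implicit Defensive.

(* Let C = N(e) :&: N(f) and let d be the degree of w.
   A common neighbour through w is one of the d - 2 edges of the star of w
   other than e and f; a common neighbour avoiding w meets e and f in vertices
   x in e - w and y in f - w, and by linearity it is the only edge through x
   and y.  Hence |C| <= (|e| - 1)(|f| - 1) + (d - 2).  The edges through w are
   disjoint outside w, so d (k - 1) <= (n - 1) + D, where the deficit D sums
   k - |g| over the edges g through w.  Every edge has size at least
   (1 - delta)(k - 1/2) since sqrt n >= k - 1/2.  If e or f is short, all
   edges have size >= 3k/4, so 4 D <= d k and d <= 2k; if few short edges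
   pass through w, each has size >= k - (k + 1)/(2m), so 2 D <= k + 1.  In
   both cases elementary arithmetic with n >= k^2 - k + 2 gives |C| <= n - 2.
   The file proves the real-number estimates, then the integer arithmetic,
   then the counting lemmas on linear hypergraphs, and finally the theorem. *)

Section RealEstimates.
Variable R : realType.
Local Open Scope ring_scope.

(* Since n >= k^2 - k + 2 > (k - 1/2)^2, we have sqrt n >= k - 1/2. *)
Lemma sqrt_ge_sub_half (n k : nat) :
  (k * k + 2 <= n + k)%N -> (k%:R - 1/2 : R) <= Num.sqrt (n%:R : R).
Proof.
move=> hn; have hnR : ((k * k + 2)%N%:R : R) <= (n + k)%N%:R by rewrite ler_nat.
rewrite !natrD natrM in hnR.
have s_ge0 := sqrtr_ge0 (n%:R : R).
have s_sq := @sqr_sqrtr R n%:R (ler0n _ _).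
set s := Num.sqrt _ in s_ge0 s_sq *; rewrite expr2 in s_sq.
have k_ge0 : (0 : R) <= k%:R by [].
nra.
Qed.

Lemma edge_size_lower (d : R) (n k x : nat) :
  d <= 1 -> (k * k + 2 <= n + k)%N ->
  (1 - d) * Num.sqrt (n%:R : R) <= x%:R -> (1 - d) * (k%:R - 1/2) <= x%:R.
Proof.
move=> d_le1 hn; apply: le_trans; apply: ler_wpM2l; last exact: sqrt_ge_sub_half.
by rewrite subr_ge0.
Qed.

Lemma three_quarters_size (d : R) (k x : nat) :
  d <= 1/10 -> (3 <= k)%N -> (1 - d) * (k%:R - 1/2) <= x%:R -> (3 * k <= 4 * x)%N.
Proof.
move=> d_small k3 hx; have k3R : (3 : R) <= k%:R by rewrite (ler_nat R 3 k).
rewrite -(ler_nat R) !natrM; nra.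
Qed.

Lemma small_edge_deficit (d : R) (k m x : nat) :
  0 < d -> 1 <= d * k%:R -> m%:R <= 1 / (3 * d) ->
  (1 - d) * (k%:R - 1/2) <= x%:R -> (2 * m * (k - x) <= k + 1)%N.
Proof.
move=> d_gt0 dk hm hx.
have hm3 : 3 * d * m%:R <= 1.
  by rewrite mulrC -ler_pdivlMr ?mulr_gt0 // mulrC.
case: (leqP k x) => [kx | xk]; first by rewrite (eqP (kx : (k - x == 0)%N)) ?muln0.
rewrite -(ler_nat R) !natrM natrB ?(ltnW xk) // natrD.
have m_ge0 : (0 : R) <= m%:R by [].
have k_ge0 : (0 : R) <= k%:R by [].
have m_small : 3 * m%:R <= (k%:R : R).
  by rewrite -(ler_pM2l d_gt0); nra.
have gap : k%:R - x%:R <= d * k%:R + 1/2 :> R by nra.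
have : m%:R * (k%:R - x%:R) <= m%:R * (d * k%:R + 1/2) :> R by exact: ler_wpM2l.
nra.
Qed.

Lemma delta_mul_ge1 (d : R) (N k : nat) :
  0 < d -> 1 / d < N%:R -> (N <= k)%N -> 1 <= d * k%:R.
Proof.
move=> d_gt0 d_inv_lt N_le; have NkR : (N%:R : R) <= k%:R by rewrite ler_nat.
have : d * (1 / d) = 1 by rewrite mul1r mulfV ?gt_eqF.
nra.
Qed.

End RealEstimates.

(* Since n <= k^2 + k + 1 < (k + 1)^2, a lower bound K^2 <= n forces
   K <= k; this is how a large n makes k large compared with 1 / delta. *)
Lemma k_ge_of_n_ge (K k n : nat) :
  0 < k -> n <= k * k + k + 1 -> K * K <= n -> K <= k.
Proof.
move=> k_gt0 n_le n_ge; rewrite leqNgt; apply/negP => k_lt.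
have : k.+1 * k.+1 <= K * K by apply: leq_mul.
nia.
Qed.

Lemma n_lower_bound (k n : nat) :
  0 < k -> (k - 1) * (k - 1) + k + 1 <= n -> k * k + 2 <= n + k.
Proof. move=> *; nia. Qed.

(* Final count when e or f is short: from d (k - 1) <= (n - 1) + D and
   4 D <= d k we get d <= 2k, whence (k - 2)(k - 1) + d - 2 <= n - 2. *)
Lemma count_one_short (d D k n : nat) :
  10 <= k -> k * k + 2 <= n + k -> n <= k * k + k + 1 ->
  d * (k - 1) <= (n - 1) + D -> 4 * D <= d * k ->
  (k - 2) * (k - 1) + (d - 2) <= n - 2.
Proof. move=> *; nia. Qed.

(* Final count when few short edges pass through w: from
   d (k - 1) <= (n - 1) + D and 2 D <= k + 1 we get d <= n - (k - 1)^2. *)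
Lemma count_few_short (d D k n : nat) :
  3 <= k -> k * k + 2 <= n + k ->
  d * (k - 1) <= (n - 1) + D -> 2 * D <= k + 1 ->
  (k - 1) * (k - 1) + (d - 2) <= n - 2.
Proof. move=> *; nia. Qed.

Lemma short_pair_bound (a b k : nat) :
  a <= k - 1 -> b <= k -> (a - 1) * (b - 1) <= (k - 2) * (k - 1).
Proof. by move=> a_le b_le; apply: leq_mul; lia. Qed.

Lemma sum_le_half (T : finType) (A : {set T}) (t : T -> nat) (b : nat) :
  (forall i, i \in A -> 2 * #|A| * t i <= b) -> 2 * \sum_(i in A) t i <= b.
Proof.
move=> small; have [A0 | A_gt0] := posnP #|A|.
  by rewrite (cards0_eq A0) big_set0.
rewrite -(leq_pmul2l A_gt0) mulnA (mulnC _ 2) big_distrr /=.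
apply: leq_trans (_ : \sum_(i in A) b <= _); first exact: leq_sum.
by rewrite sum_nat_const.
Qed.

Lemma card_setD1_in (T : finType) (A : {set T}) (x : T) :
  x \in A -> #|A :\ x| = #|A| - 1.
Proof. by move=> xA; rewrite (cardsD1 x A) xA add1n subn1. Qed.

Section LinearHypergraph.
Variables (n : nat) (H : {set {set 'I_n}}).

Definition star (w : 'I_n) : {set {set 'I_n}} := [set g in H | w \in g].

(* The first vertex found in g :&: e, defaulting to w when they are disjoint. *)
Definition meet_vertex (w : 'I_n) (g e : {set 'I_n}) : 'I_n :=
  odflt w [pick x in g :&: e].

Lemma meet_vertexP w g e : g :&: e != set0 -> meet_vertex w g e \in g :&: e.
Proof.
rewrite /meet_vertex; case: pickP => [x //|no_x].
by case/set0Pn => x; rewrite no_x.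
Qed.

Definition short_star (w : 'I_n) (k : nat) : {set {set 'I_n}} :=
  [set g in H | (#|g| <= k - 1) && (w \in g)].

Lemma deficit_short_star w k :
  \sum_(g in star w) (k - #|g|) = \sum_(g in short_star w k) (k - #|g|).
Proof.
rewrite [LHS]big_mkcond [RHS]big_mkcond; apply: eq_bigr => g _.
rewrite !inE; case: (g \in H) (w \in g) => [] [] /=; rewrite ?andbT ?andbF //.
by case: leqP => // k_le; apply/eqP; rewrite subn_eq0; lia.
Qed.

Lemma deficit_large_edges w k : (forall g, g \in star w -> 3 * k <= 4 * #|g|) ->
  4 * \sum_(g in star w) (k - #|g|) <= #|star w| * k.
Proof.
move=> large; rewrite big_distrr -sum_nat_const /=.
by apply: leq_sum => g /large; move: #|g| => x; lia.
Qed.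

Hypothesis linH : linear_hypergraph H.

Lemma linear_edge_eq g1 g2 x y : g1 \in H -> g2 \in H -> x != y ->
  x \in g1 -> y \in g1 -> x \in g2 -> y \in g2 -> g1 = g2.
Proof.
move=> g1H g2H xy xg1 yg1 xg2 yg2; case: (eqVneq g1 g2) => // g12.
have /card_le1_eqP eq_xy := linH g1H g2H g12.
by move: xy; rewrite (eq_xy x y) ?inE ?xg1 ?xg2 ?yg1 ?yg2 ?eqxx.
Qed.

(* The edges through w are disjoint outside w, so their sizes minus one add
   up to at most the number n - 1 of other vertices. *)
Lemma star_sum w : \sum_(g in star w) #|g :\ w| <= n - 1.
Proof.
rewrite (eq_bigr (fun g => \sum_(v in g :\ w) 1)); last by move=> g _; rewrite sum1_card.
rewrite (exchange_big_dep (fun v => v != w)) /=; last first.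
  by move=> g v _ /setD1P[].
apply: leq_trans (_ : \sum_(v | v != w) 1 <= _).
  apply: leq_sum => v vw; rewrite sum1_card.
  apply/card_le1_eqP => g1 g2 /andP[/setIdP[g1H wg1] /setD1P[_ vg1]].
  move=> /andP[/setIdP[g2H wg2] /setD1P[_ vg2]].
  exact: linear_edge_eq g2H g1H vw vg2 wg2 vg1 wg1.
by rewrite sum1_card cardC1 card_ord subn1.
Qed.

Lemma degree_deficit w k :
  #|star w| * (k - 1) <= (n - 1) + \sum_(g in star w) (k - #|g|).
Proof.
rewrite -sum_nat_const; apply: leq_trans (leq_add (star_sum w) (leqnn _)).
rewrite -big_split /=; apply: leq_sum => g; rewrite inE => /andP[_ wg].
by rewrite card_setD1_in //; move: #|g| => x; lia.
Qed.

Section CommonNeighbours.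
Variables (e f : {set 'I_n}) (w : 'I_n).
Hypotheses (eH : e \in H) (fH : f \in H) (ef : e != f) (wef : w \in e :&: f).

(* Common neighbours through w are the edges of the star other than e, f. *)
Lemma common_nbhd_through :
  #|nbhd H e :&: nbhd H f :&: star w| <= #|star w| - 2.
Proof.
move: wef; rewrite inE => /andP[we wf].
have eS : e \in star w by rewrite inE eH we.
have fS : f \in star w :\ e by rewrite !inE eq_sym ef fH wf.
rewrite (cardsD1 e (star w)) eS (cardsD1 f (star w :\ e)) fS add1n add1n subn2 /=.
apply: subset_leq_card; apply/subsetP => g; rewrite !inE.
by case/andP=> /andP[/and3P[_ -> _] /and3P[_ -> _]] ->.
Qed.

(* A common neighbour avoiding w meets e and f in vertices other than w, and
   by linearity it is determined by this pair of vertices. *)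
Lemma common_nbhd_avoiding :
  #|nbhd H e :&: nbhd H f :\: star w| <= (#|e| - 1) * (#|f| - 1).
Proof.
move: wef; rewrite inE => /andP[we wf].
pose pair_of g := (meet_vertex w g e, meet_vertex w g f).
have pairP g : g \in nbhd H e :&: nbhd H f :\: star w ->
    [/\ g \in H, pair_of g \in setX (e :\ w) (f :\ w),
        meet_vertex w g e \in g & meet_vertex w g f \in g].
  rewrite !inE => /andP[notS /andP[/and3P[gH _ ge] /and3P[_ _ gf]]].
  rewrite gH /= in notS.
  move: (meet_vertexP w ge) (meet_vertexP w gf); rewrite !inE.
  move=> /andP[xg xe] /andP[yg yf]; split=> //.
  by rewrite xe yf !andbT; apply/andP; split; apply: contraNneq notS => <-.
rewrite -(card_in_imset (f := pair_of)); last first.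
  move=> g1 g2 /pairP[g1H _ xg1 yg1] /pairP[g2H P2 xg2 yg2] eq12.
  move: xg1 yg1 P2; rewrite /pair_of in eq12; case: eq12 => -> -> xg1 yg1.
  rewrite !inE => /andP[/andP[xw xe] /andP[_ yf]].
  apply: (linear_edge_eq g1H g2H _ xg1 yg1 xg2 yg2).
  apply: contra xw => /eqP xy.
  have xef : meet_vertex w g2 e \in e :&: f by rewrite inE xe xy.
  by rewrite ((card_le1_eqP (linH eH fH ef)) _ _ xef wef).
rewrite -(card_setD1_in we) -(card_setD1_in wf) -cardsX.
apply: subset_leq_card; apply/subsetP => _ /imsetP[g /pairP[] _ P _ _ ->].
exact: P.
Qed.

Lemma common_nbhd_bound :
  #|nbhd H e :&: nbhd H f| <= (#|e| - 1) * (#|f| - 1) + (#|star w| - 2).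
Proof.
rewrite -(cardsID (star w)) addnC.
exact: leq_add common_nbhd_avoiding common_nbhd_through.
Qed.

End CommonNeighbours.

End LinearHypergraph.

Local Open Scope ring_scope.

Theorem proposition5p5 (R : realType) :
  exists delta0 : R, 0 < delta0 /\
  forall delta : R, 0 < delta -> delta <= delta0 ->
  exists n0 : nat, forall (n k : nat) (H : {set {set 'I_n}})
    (e f : {set 'I_n}) (w : 'I_n),
    (n0 <= n)%N -> (0 < n)%N -> (0 < k)%N ->
    (k ^ 2 + k + 1 >= n)%N -> (n >= (k - 1) ^ 2 + k + 1)%N ->
    hypergraph H -> linear_hypergraph H ->
    (forall g, g \in H -> (1 - delta) * Num.sqrt (n%:R : R) <= #|g|%:R) ->
    e \in H -> f \in H -> e != f -> e :&: f != set0 ->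
    (#|e| <= k)%N -> (#|f| <= k)%N ->
    w \in e :&: f ->
    let m := #|[set g in H | (#|g| <= k - 1)%N && (w \in g)]| in
    ((#|e| <= k - 1)%N \/ (#|f| <= k - 1)%N \/ m%:R <= 1 / (3 * delta)) ->
    useful_pair H e f.
Proof.
exists (1/10); split; first lra.
move=> d d_gt0 d_small.
have [N d_inv_lt] : exists N : nat, 1 / d < N%:R.
  by exists (Num.Def.archi_bound (1 / d)); apply: archi_boundP; rewrite divr_ge0 ?ltW.
exists ((N + 10) * (N + 10))%N.
move=> n k H e f w n0_le _ k_gt0 n_le n_ge _ linH sizeH eH fH ef efI ek fk wef m cases.
rewrite -!mulnn in n_le n_ge.
have k_large : (N + 10 <= k)%N := k_ge_of_n_ge k_gt0 n_le n0_le.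
have k_ge10 : (10 <= k)%N := leq_trans (leq_addl N 10) k_large.
have k_ge3 : (3 <= k)%N := leq_trans (isT : (3 <= 10)%N) k_ge10.
have n_ge_k2 : (k * k + 2 <= n + k)%N := n_lower_bound k_gt0 n_ge.
have dk : 1 <= d * k%:R := delta_mul_ge1 d_gt0 d_inv_lt (leq_trans (leq_addr 10 N) k_large).
have lower g : g \in H -> (1 - d) * (k%:R - 1/2) <= #|g|%:R.
  by move=> gH; apply: edge_size_lower (sizeH g gH) => //; lra.
have common := common_nbhd_bound linH eH fH ef wef.
have degree := degree_deficit linH w k.
split=> //; apply: leq_trans common _.
have one_short : ((#|e| - 1) * (#|f| - 1) <= (k - 2) * (k - 1))%N ->
    ((#|e| - 1) * (#|f| - 1) + (#|star H w| - 2) <= n - 2)%N.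
  move=> P; apply: leq_trans (leq_add P (leqnn _)) _.
  apply: count_one_short degree _ => //.
  apply: deficit_large_edges => g /setIdP[gH _].
  exact: three_quarters_size (lower g gH).
case: cases => [short | [short | few]].
- exact/one_short/short_pair_bound.
- by apply: one_short; rewrite mulnC; apply: short_pair_bound.
- have P := leq_mul (leq_sub2r 1 ek) (leq_sub2r 1 fk).
  apply: leq_trans (leq_add P (leqnn _)) _.
  apply: count_few_short degree _ => //.
  rewrite deficit_short_star; apply: sum_le_half => g /setIdP[gH _].
  exact: small_edge_deficit (lower g gH).
Qed.
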